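(* Let $G$ be a finite simple graph with maximum degree at most $3$ and let $CG$ be its clawed graph, with $n=|E(CG)|$. Then $M_2(CG)\simeq S^{\frac{2}{3}n-1}$.
   Context: For a graph $G$ of maximum degree at most $3$, the clawed graph $CG$ is obtained by subdividing every edge of $G$ (replacing $\{u,v\}$ by a new vertex $w$ and edges $\{u,w\},\{w,v\}$) and then attaching new leaves (pendant edges to new vertices) to every original vertex $v\in V(G)$ so that every original vertex has degree exactly $3$. A $2$-matching of a graph is a set of edges such that every vertex has degree at most $2$ in it. The $2$-matching complex $M_2(G)$ is the simplicial complex whose vertices are the edges of $G$ and whose faces are the $2$-matchings of $G$. $\simeq$ denotes homotopy equivalence. *)

From HB Require Import structures.
From mathcomp Require Import all_boot all_order all_algebra.
From mathcomp Require Import all_classical all_reals all_analysis.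
Set Implicit Arguments. Unset Strict Implicit. Unset Printing Implicit Defensive.
Import Order.TTheory GRing.Theory Num.Theory numFieldNormedType.Exports.
Local Open Scope classical_set_scope.
Local Open Scope ring_scope.

(* Finite simple graphs: a vertex finType V with an adjacency relation *)
(* adj (assumed symmetric and irreflexive where needed).               *)

Section Graphs.
Variables (V : finType) (adj : rel V).

Definition deg (v : V) : nat := #|[set w | adj v w]|.

Definition is_edge (s : {set V}) : bool :=
  [exists x, exists y, adj x y && (s == [set x; y]%SET)].

Definition edge_type := {s : {set V} | is_edge s}.
HB.instance Definition _ := Finite.on edge_type.

Definition two_matching (M : {set edge_type}) : bool :=
  [forall v : V, #|[set e in M | v \in val e]| <= 2]%N.

End Graphs.

(* The clawed graph CG of G.                                           *)
(*  vertices:  original vertices v : V,                                *)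
(*             subdivision vertices (one per edge s of G),             *)
(*             leaves (v, i) with i < 3 - deg v (new pendant vertices) *)

Section Clawed.
Variables (V : finType) (adj : rel V).

Definition leaf_pred (p : V * 'I_3) : bool := (p.2 < 3 - deg adj p.1)%N.

Definition CGV : finType :=
  ((V + edge_type adj) + {p : V * 'I_3 | leaf_pred p})%type.

Definition cg_adj (a b : CGV) : bool :=
  match a, b with
  | inl (inl v), inl (inr s) => v \in val s
  | inl (inr s), inl (inl v) => v \in val s
  | inl (inl v), inr p => (val p).1 == v
  | inr p, inl (inl v) => (val p).1 == v
  | _, _ => false
  end.

End Clawed.

(* Geometric realization of a finite simplicial complex on vertex set  *)
(* E, given by its predicate of faces, as a subspace of R^#|E|:        *)
(* points of the standard simplex whose support is a face.             *)

Definition realization (R : realType) (E : finType) (face : pred {set E})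
  : set 'rV[R]_#|E| :=
  [set x : 'rV[R]_#|E| | (forall i, 0 <= x ord0 i) /\ \sum_i x ord0 i = 1 /\
           face [set e | x ord0 (enum_rank e) != 0]%SET].

Definition M2 (W : finType) (r : rel W) : pred {set edge_type r} :=
  fun M => two_matching M.

(* unit sphere S^(k-1) in R^k (Euclidean norm) *)
Definition unit_sphere (R : realType) (k : nat) : set 'rV[R]_k :=
  [set x | \sum_i x ord0 i ^+ 2 = 1].

Section Homotopy.
Variable R : realType.

Definition homotopic_on (m k : nat) (A : set 'rV[R]_m) (B : set 'rV[R]_k)
    (f g : 'rV[R]_m -> 'rV[R]_k) : Prop :=
  exists H : R * 'rV[R]_m -> 'rV[R]_k,
    {within `[0, 1]%classic `*` A, continuous H} /\
    (forall t x, `[0, 1]%classic t -> A x -> B (H (t, x))) /\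
    (forall x, A x -> H (0, x) = f x) /\
    (forall x, A x -> H (1, x) = g x).

Definition homotopy_equivalent (m k : nat) (A : set 'rV[R]_m)
    (B : set 'rV[R]_k) : Prop :=
  exists (f : 'rV[R]_m -> 'rV[R]_k) (g : 'rV[R]_k -> 'rV[R]_m),
    (forall x, A x -> B (f x)) /\ (forall y, B y -> A (g y)) /\
    {within A, continuous f} /\ {within B, continuous g} /\
    homotopic_on A A (g \o f) id /\ homotopic_on B B (f \o g) id.

End Homotopy.

(* Every edge of the clawed graph joins an original vertex of G to a new vertex, and every
   original vertex has exactly three incident edges, so the edges of CG split into |V| claws of
   size 3. New vertices have degree at most 2, hence a set of edges is a 2-matching exactly when
   it contains no whole claw: M_2(CG) is the join of |V| boundaries of triangles, a sphere of
   dimension 2|V| - 1 = 2n/3 - 1.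
   The homeomorphism from a join of boundaries of d-simplices to the sphere subtracts, in every
   block, the last barycentric coordinate from the others and normalises; its inverse appends a
   zero coordinate to every block, shifts each block by its minimum (so that some coordinate of
   the block vanishes) and rescales the total sum to 1. *)
From HB Require Import structures.
From mathcomp Require Import all_boot all_order all_algebra.
From mathcomp Require Import all_classical all_reals all_analysis.
Set Implicit Arguments. Unset Strict Implicit. Unset Printing Implicit Defensive.
Import Order.TTheory GRing.Theory Num.Theory numFieldNormedType.Exports.
Local Open Scope classical_set_scope.

Lemma homotopic_on_id (R : realType) m (A : set 'rV[R]_m) (h : 'rV[R]_m -> 'rV[R]_m) :
  (forall x, A x -> h x = x) -> homotopic_on A A h id.
Proof.
move=> hE; exists snd; split; [|split; [|split]] => //.
- by apply: continuous_subspaceT => p; exact: cvg_snd.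
- by move=> x /hE.
Qed.

Lemma inverse_maps_homotopy_equivalent (R : realType) m k
    (A : set 'rV[R]_m) (B : set 'rV[R]_k)
    (f : 'rV[R]_m -> 'rV[R]_k) (g : 'rV[R]_k -> 'rV[R]_m) :
  (forall x, A x -> B (f x)) -> (forall y, B y -> A (g y)) ->
  {within A, continuous f} -> {within B, continuous g} ->
  (forall x, A x -> g (f x) = x) -> (forall y, B y -> f (g y) = y) ->
  homotopy_equivalent A B.
Proof.
move=> fAB gBA fc gc gfK fgK; exists f, g.
by do 5!split => //; apply: homotopic_on_id.
Qed.

Section RowsIndexedByFinType.
Local Open Scope ring_scope.
Variables (R : realType) (T : finType).

Definition entry (x : 'rV[R]_#|T|) (t : T) : R := x ord0 (enum_rank t).

Definition row_of (f : T -> R) : 'rV[R]_#|T| := \row_k f (enum_val k).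

Lemma entry_row_of f t : entry (row_of f) t = f t.
Proof. by rewrite /entry mxE enum_rankK. Qed.

Lemma entryZ c (x : 'rV[R]_#|T|) t : entry (c *: x) t = c * entry x t.
Proof. by rewrite /entry mxE. Qed.

Lemma entry_inj (x y : 'rV[R]_#|T|) : (forall t, entry x t = entry y t) -> x = y.
Proof. by move=> xy; apply/rowP => k; rewrite -[k]enum_valK; apply: xy. Qed.

Lemma entry_neq0 (x : 'rV[R]_#|T|) : x != 0 -> exists t, entry x t != 0.
Proof.
move=> x0; apply/existsP; apply: contraNT x0 => /existsPn x0.
by apply/eqP; apply: entry_inj => t; apply/eqP; move: (x0 t); rewrite negbK /entry mxE.
Qed.

Lemma sum_entry (x : 'rV[R]_#|T|) : \sum_i x ord0 i = \sum_t entry x t.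
Proof.
by rewrite (reindex enum_rank) //; exists enum_val => i _; rewrite ?enum_rankK ?enum_valK.
Qed.

Lemma entry_continuous t : continuous (entry ^~ t).
Proof. exact: coord_continuous. Qed.

Lemma row_of_continuous {U : topologicalType} (F : U -> T -> R) u :
  (forall t, {for u, continuous (F ^~ t)}) -> {for u, continuous (row_of \o F)}.
Proof.
move=> Fc; apply/cvgrPdist_le => /= e e0; near=> v.
rewrite [leLHS]/Num.Def.normr /= mx_normrE (bigmax_le _ (ltW e0)) //= => -[i k] _.
rewrite !mxE /=; move: (enum_val k); near: v; apply: filter_forall => t.
exact: (cvgrPdist_le _ _).1 (Fc t) _ e0.
Unshelve. all: by end_near. Qed.

End RowsIndexedByFinType.

Section Normalize.
Local Open Scope ring_scope.
Variables (R : realType) (n : nat).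
Implicit Types (y : 'rV[R]_n) (c : R).
Local Notation sphere := (@unit_sphere R n).

Definition sqnorm y : R := \sum_i y ord0 i ^+ 2.

Definition normalize y : 'rV[R]_n := (Num.sqrt (sqnorm y))^-1 *: y.

Lemma sqnormZ c y : sqnorm (c *: y) = c ^+ 2 * sqnorm y.
Proof. by rewrite /sqnorm mulr_sumr; apply: eq_bigr => i _; rewrite mxE exprMn. Qed.

Lemma sqnorm_gt0 y : y != 0 -> 0 < sqnorm y.
Proof.
move=> y0; have [i yi0] : exists i, y ord0 i != 0.
  apply/existsP; apply: contraNT y0 => /existsPn y0.
  by apply/eqP/rowP => i; rewrite mxE; apply/eqP/negPn.
rewrite /sqnorm (bigD1 i) //= ltr_wpDr ?sumr_ge0 // => [j _|]; first exact: sqr_ge0.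
by rewrite lt_def sqrf_eq0 yi0 sqr_ge0.
Qed.

Lemma sphere_neq0 y : sphere y -> y != 0.
Proof.
rewrite /unit_sphere /= -/(sqnorm y) => y1; apply: contra_eqN y1 => /eqP ->.
by rewrite -(scale0r (0 : 'rV[R]_n)) sqnormZ expr0n mul0r eq_sym oner_eq0.
Qed.

Lemma normalize_sphere y : y != 0 -> sphere (normalize y).
Proof.
move=> /sqnorm_gt0 y0; rewrite /unit_sphere /= -/(sqnorm _) sqnormZ exprVn.
by rewrite sqr_sqrtr ?ltW // mulVf ?gt_eqF.
Qed.

Lemma normalizeZ c y : 0 < c -> sphere y -> normalize (c *: y) = y.
Proof.
move=> c0 y1; rewrite /normalize sqnormZ [sqnorm y]y1 mulr1 sqrtr_sqr gtr0_norm //.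
by rewrite scalerA mulVf ?scale1r ?gt_eqF.
Qed.

Lemma sqnorm_continuous : continuous sqnorm.
Proof.
apply: continuous_big => [|i _ y]; first exact: add_continuous.
apply: (continuous_comp (f := fun x : 'rV[R]_n => x ord0 i) (g := fun r : R => r ^+ 2)).
  exact: coord_continuous.
exact: exprn_continuous.
Qed.

Lemma normalize_continuous y : y != 0 -> {for y, continuous normalize}.
Proof.
move=> /sqnorm_gt0 y0.
apply: (continuousZ (s := fun z => (Num.sqrt (sqnorm z))^-1)); last exact: cvg_id.
apply: continuousV; first by rewrite gt_eqF ?sqrtr_gt0.
apply: (continuous_comp (f := sqnorm)); [exact: sqnorm_continuous | exact: sqrt_continuous].
Qed.

End Normalize.

Section JoinOfSimplexBoundaries.
Local Open Scope ring_scope.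
Variables (R : realType) (E W : finType) (d : nat).
Variables (phi : W * 'I_d.+1 -> E) (psi : E -> W * 'I_d.+1).
Hypotheses (phiK : cancel phi psi) (psiK : cancel psi phi).
Variable face : pred {set E}.
(* The complex is the join of the boundaries of the #|W| simplices [phi (w, _)]. *)
Hypothesis face_blocks : forall M, face M = [forall w, [exists i, phi (w, i) \notin M]].

Local Notation realized := (@realization R E face).
Local Notation sphere := (@unit_sphere R #|{: W * 'I_d}|).
Implicit Types (x : 'rV[R]_#|E|) (z : 'rV[R]_#|{: W * 'I_d}|).

Definition block_diff x : 'rV[R]_#|{: W * 'I_d}| :=
  row_of (fun p => entry x (phi (p.1, lift ord_max p.2)) - entry x (phi (p.1, ord_max))).

Definition to_sphere x := normalize (block_diff x).

Definition block_coord z w (i : 'I_d.+1) : R :=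
  if unlift ord_max i is Some j then entry z (w, j) else 0.

Definition block_min z w : R := \big[Num.min/0]_i block_coord z w i.

Definition block_shift z : 'rV[R]_#|E| :=
  row_of (fun e => block_coord z (psi e).1 (psi e).2 - block_min z (psi e).1).

Definition from_sphere z := (\sum_i block_shift z ord0 i)^-1 *: block_shift z.

Lemma entry_block_diff x w j : entry (block_diff x) (w, j) =
  entry x (phi (w, lift ord_max j)) - entry x (phi (w, ord_max)).
Proof. by rewrite entry_row_of. Qed.

Lemma block_coord_lift z w j : block_coord z w (lift ord_max j) = entry z (w, j).
Proof. by rewrite /block_coord liftK. Qed.

Lemma block_coord_max z w : block_coord z w ord_max = 0.
Proof. by rewrite /block_coord unlift_none. Qed.

Lemma block_min_le z w i : block_min z w <= block_coord z w i.
Proof. exact: bigmin_le. Qed.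

Lemma block_min_attained z w : exists i, block_min z w = block_coord z w i.
Proof.
rewrite /block_min; apply: (big_ind (fun m => exists i, m = block_coord z w i)).
- by exists ord_max; rewrite block_coord_max.
- by move=> _ _ [i ->] [j ->]; rewrite /Num.min; case: ifP; [exists i | exists j].
- by move=> i _; exists i.
Qed.

Lemma entry_block_shift z w i :
  entry (block_shift z) (phi (w, i)) = block_coord z w i - block_min z w.
Proof. by rewrite entry_row_of phiK. Qed.

Lemma block_shift_ge0 z k : 0 <= block_shift z ord0 k.
Proof. by rewrite mxE subr_ge0 block_min_le. Qed.

Lemma block_diff_neq0 x : realized x -> block_diff x != 0.
Proof.
move=> [x_ge0 [x_sum1 x_face]]; apply/negP => /eqP diff0.
have blockE w i : entry x (phi (w, i)) = entry x (phi (w, ord_max)).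
  case: (unliftP ord_max i) => [j ->|<-] //; apply/eqP; rewrite -subr_eq0.
  by rewrite -entry_block_diff diff0 /entry mxE.
have x0 e : entry x e = 0.
  rewrite -(psiK e); case: (psi e) => w i.
  move: x_face; rewrite face_blocks => /forallP /(_ w) /existsP [i0].
  by rewrite inE negbK => /eqP xi0; rewrite blockE -(blockE w i0).
by move: x_sum1; rewrite sum_entry big1 // => /esym /eqP; rewrite oner_eq0.
Qed.

Lemma to_sphere_in x : realized x -> sphere (to_sphere x).
Proof. by move=> /block_diff_neq0; apply: normalize_sphere. Qed.

Lemma sum_block_shift_gt0 z : sphere z -> 0 < \sum_k block_shift z ord0 k.
Proof.
move=> /sphere_neq0 /entry_neq0 [[w j] zwj].
rewrite lt_def sumr_ge0 ?andbT => [|k _]; last exact: block_shift_ge0.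
apply: contra zwj => /eqP /(psumr_eq0P (fun k _ => block_shift_ge0 z k)) shift0.
have := shift0 (enum_rank (phi (w, lift ord_max j))) isT.
have := shift0 (enum_rank (phi (w, ord_max))) isT.
rewrite -![block_shift z ord0 _]/(entry _ _) !entry_block_shift.
rewrite block_coord_lift block_coord_max sub0r => /eqP; rewrite oppr_eq0 => /eqP ->.
by rewrite subr0 => ->.
Qed.

Lemma from_sphere_in z : sphere z -> realized (from_sphere z).
Proof.
move=> /sum_block_shift_gt0 s_gt0; split; [|split].
- by move=> k; rewrite mxE mulr_ge0 ?invr_ge0 ?(ltW s_gt0) ?block_shift_ge0.
- by under eq_bigr do rewrite mxE; rewrite -mulr_sumr mulVf ?gt_eqF.
- rewrite face_blocks; apply/forallP => w; have [i mini] := block_min_attained z w.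
  apply/existsP; exists i; rewrite inE negbK -/(entry _ _) entryZ.
  by rewrite entry_block_shift mini subrr mulr0.
Qed.

Lemma to_sphereK x : realized x -> from_sphere (to_sphere x) = x.
Proof.
move=> xS; have c_gt0 := sqnorm_gt0 (block_diff_neq0 xS).
move: xS => [x_ge0 [x_sum1 x_face]].
set c := Num.sqrt (sqnorm (block_diff x)).
have ci_gt0 : 0 < c^-1 by rewrite invr_gt0 sqrtr_gt0.
have to_sphere_coord w i : block_coord (to_sphere x) w i =
    c^-1 * (entry x (phi (w, i)) - entry x (phi (w, ord_max))).
  case: (unliftP ord_max i) => [j ->|->]; last by rewrite block_coord_max subrr mulr0.
  by rewrite block_coord_lift entryZ entry_block_diff.
(* Some barycentric coordinate of x vanishes in every block; the minimum is reached there. *)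
have minE w : block_min (to_sphere x) w = - (c^-1 * entry x (phi (w, ord_max))).
  apply/le_anti/andP; split.
    move: x_face; rewrite face_blocks => /forallP /(_ w) /existsP [i0].
    rewrite inE negbK -/(entry _ _) => /eqP xi0.
    by apply: le_trans (block_min_le _ _ i0) _; rewrite to_sphere_coord xi0 sub0r mulrN.
  have [i ->] := block_min_attained (to_sphere x) w.
  by rewrite to_sphere_coord mulrBr addrC lerDl mulr_ge0 ?(ltW ci_gt0) ?x_ge0.
have shiftE : block_shift (to_sphere x) = c^-1 *: x.
  apply: entry_inj => e; rewrite -(psiK e); case: (psi e) => w i.
  by rewrite entry_block_shift to_sphere_coord minE entryZ mulrBr opprK subrK.
rewrite /from_sphere shiftE; under eq_bigr do rewrite mxE.
by rewrite -mulr_sumr x_sum1 mulr1 scalerA mulVf ?scale1r ?gt_eqF.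
Qed.

Lemma from_sphereK z : sphere z -> to_sphere (from_sphere z) = z.
Proof.
move=> zS; have s_gt0 := sum_block_shift_gt0 zS.
have diffE : block_diff (from_sphere z) = (\sum_k block_shift z ord0 k)^-1 *: z.
  apply: entry_inj => -[w j]; rewrite entry_block_diff !entryZ !entry_block_shift.
  by rewrite block_coord_lift block_coord_max -mulrBr sub0r opprK subrK.
by rewrite /to_sphere diffE normalizeZ ?invr_gt0.
Qed.

Lemma block_diff_continuous : continuous block_diff.
Proof.
move=> x; apply: (row_of_continuous (F := fun y p =>
  entry y (phi (p.1, lift ord_max p.2)) - entry y (phi (p.1, ord_max)))) => p.
by apply: continuousB; apply: entry_continuous.
Qed.

Lemma to_sphere_continuous : {within realized, continuous to_sphere}.
Proof.
apply: continuous_in_subspaceT => x /[1!inE] xS.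
apply: continuous_comp; first exact: block_diff_continuous.
exact: normalize_continuous (block_diff_neq0 xS).
Qed.

Lemma block_coord_continuous w i : continuous (fun z => block_coord z w i).
Proof.
rewrite /block_coord; case: unlift => [j|]; last exact: cst_continuous.
exact: entry_continuous.
Qed.

Lemma block_shift_continuous : continuous block_shift.
Proof.
move=> z; apply: (row_of_continuous (F := fun y e =>
  block_coord y (psi e).1 (psi e).2 - block_min y (psi e).1)) => e.
apply: continuousB; first exact: block_coord_continuous.
apply: continuous_big => [|i _]; [exact: min_continuous | exact: block_coord_continuous].
Qed.

Lemma from_sphere_continuous : {within sphere, continuous from_sphere}.
Proof.
apply: continuous_in_subspaceT => z /[1!inE] /sum_block_shift_gt0 s_gt0.
apply: (continuousZ (s := fun y => (\sum_k block_shift y ord0 k)^-1));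
  last exact: block_shift_continuous.
apply: continuousV; first by rewrite gt_eqF.
apply: continuous_big => [|k _]; first exact: add_continuous.
move=> y; apply: (continuous_comp (f := block_shift) (g := fun x => x ord0 k)).
  exact: block_shift_continuous.
exact: coord_continuous.
Qed.

Theorem boundary_join_homotopy_sphere : homotopy_equivalent realized sphere.
Proof.
apply: (inverse_maps_homotopy_equivalent (f := to_sphere) (g := from_sphere)).
- exact: to_sphere_in.
- exact: from_sphere_in.
- exact: to_sphere_continuous.
- exact: from_sphere_continuous.
- exact: to_sphereK.
- exact: from_sphereK.
Qed.

End JoinOfSimplexBoundaries.

Section Equipartition.
Local Close Scope classical_set_scope.
Variables (E W : finType) (n : nat) (F : W -> {set E}).
Hypotheses (F_cover : forall e, exists v, e \in F v)
  (F_disjoint : forall v w e, e \in F v -> e \in F w -> v = w)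
  (card_F : forall v, #|F v| = n).

Lemma equipartition_indexing : exists phi : W * 'I_n -> E,
  bijective phi /\ forall v, F v = [set phi (v, i) | i : 'I_n].
Proof.
pose phi (p : W * 'I_n) : E := enum_val (cast_ord (esym (card_F p.1)) p.2).
have phiF v i : phi (v, i) \in F v by apply: enum_valP.
have phi_onto v e : e \in F v -> exists i, e = phi (v, i).
  move=> eFv; exists (cast_ord (card_F v) (enum_rank_in eFv e)).
  by rewrite /phi /= cast_ordK enum_rankK_in.
have phi_inj : injective phi.
  move=> [v i] [w j] /= phi_eq.
  have vw : v = w by apply: (F_disjoint (phiF v i)); rewrite phi_eq phiF.
  by subst w; move: phi_eq; rewrite /phi /= => /enum_val_inj /cast_ord_inj ->.
exists phi; split=> [|v]; last first.
  apply/setP => e; apply/idP/imsetP => [/phi_onto [i ->]|[i _ ->]]; [by exists i | exact: phiF].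
apply: inj_card_bij => //; rewrite -(card_codom phi_inj) subset_leq_card //.
by apply/fintype.subsetP => e _; have [v /phi_onto [i ->]] := F_cover e; exact: codom_f.
Qed.

Lemma card_equipartition : #|E| = #|W| * n.
Proof.
have [phi [phi_bij _]] := equipartition_indexing.
by rewrite -(bij_eq_card phi_bij) card_prod card_ord.
Qed.

End Equipartition.

Theorem partition_complex_homotopy_sphere (R : realType) (E W : finType) (d : nat)
    (F : W -> {set E}) (face : pred {set E}) :
  (forall e, exists v, e \in F v) ->
  (forall v w e, e \in F v -> e \in F w -> v = w) ->
  (forall v, #|F v| = d.+1) ->
  (forall M, face M = [forall v, ~~ (F v \subset M)]) ->
  homotopy_equivalent (@realization R E face) (@unit_sphere R #|{: W * 'I_d}|).
Proof.
move=> F_cover F_disjoint card_F faceE.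
have [phi [[psi phiK psiK] Fv]] := equipartition_indexing F_cover F_disjoint card_F.
apply: (boundary_join_homotopy_sphere R phiK psiK) => M; rewrite faceE.
apply: eq_forallb => v; rewrite Fv -negb_forall; congr (~~ _).
by apply/fintype.subsetP/forallP => [sub i | allM _ /imsetP [i _ ->]]; rewrite ?sub ?imset_f.
Qed.

Section EdgesAtVertex.
Local Close Scope classical_set_scope.
Variables (T : finType) (r : rel T).
Hypotheses (r_sym : symmetric r) (r_irr : irreflexive r).

Lemma card_edge (e : edge_type r) : #|val e| = 2.
Proof.
case: e => _ /= /existsP [x /existsP [y /andP [xy /eqP ->]]].
by rewrite cards2; case: eqP xy => [->|]; rewrite ?r_irr.
Qed.

Lemma degE x : deg r x = #|[pred y | r x y]|.
Proof. by apply: eq_card => y; rewrite inE; apply/idP/idP; rewrite in_setE. Qed.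

Lemma card_edges_at x : #|[set e : edge_type r | x \in val e]| = deg r x.
Proof.
have edge_at y : r x y -> is_edge r [set x; y].
  by move=> xy; apply/existsP; exists x; apply/existsP; exists y; rewrite xy eqxx.
rewrite degE -(card_imset _ val_inj) -[RHS](@card_in_imset _ _ (fun y => [set x; y])).
  apply: eq_card => s; apply/imsetP/imsetP => [[[S S_edge]]|[y]].
    rewrite inE /= => xS ->{s}; move/existsP: S_edge => [u /existsP [v /andP [uv /eqP SE]]].
    move: xS uv; rewrite SE !inE => /orP [] /eqP -> uv; first by exists v.
    by exists u; rewrite ?inE 1?r_sym // finset.setUC.
  by rewrite inE => /edge_at xy ->; exists (Sub _ xy) => //; rewrite inE /= set21.
move=> y z; rewrite !inE => xy xz yz; have : y \in [set x; z] by rewrite -yz set22.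
by rewrite !inE => /orP [/eqP yx|/eqP //]; move: xy; rewrite yx r_irr.
Qed.

End EdgesAtVertex.

Section ClawedGraph.
Local Close Scope classical_set_scope.
Variables (V : finType) (adj : rel V).
Hypotheses (adj_sym : symmetric adj) (adj_irr : irreflexive adj)
  (deg_le3 : forall v, deg adj v <= 3).

Local Notation CG := (CGV adj).
Local Notation cadj := (@cg_adj V adj).
Local Notation E := (edge_type cadj).

Definition orig (v : V) : CG := inl (inl v).

Definition is_orig (y : CG) : bool := if y is inl (inl _) then true else false.

Lemma cg_adj_sym : symmetric cadj.
Proof. by move=> [[v|s]|p] [[w|t]|q] //=; rewrite eq_sym. Qed.

Lemma cg_adj_irr : irreflexive cadj.
Proof. by move=> [[v|s]|p]. Qed.

Lemma cg_edge_shape (e : E) :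
  exists v y, [/\ cadj (orig v) y, val e = [set orig v; y] & ~~ is_orig y].
Proof.
case: e => _ /= /existsP [x /existsP [y /andP [xy /eqP ->]]].
move: x y xy => [[v|s]|p] [[w|t]|q] //= xy.
- by exists v, (inl (inr t)).
- by exists v, (inr q).
- by exists w, (inl (inr s)); rewrite finset.setUC.
- by exists w, (inr p); rewrite finset.setUC.
Qed.

Definition claw (v : V) : {set E} := [set e : E | orig v \in val e].

Lemma claw_cover e : exists v, e \in claw v.
Proof. by have [v [y [_ eE _]]] := cg_edge_shape e; exists v; rewrite inE eE set21. Qed.

Lemma claw_disjoint v w e : e \in claw v -> e \in claw w -> v = w.
Proof.
have [u [y [_ eE y_new]]] := cg_edge_shape e.
have claw_u x : e \in claw x -> x = u.
  by rewrite inE eE !inE => /orP [/eqP [] | /eqP xy] //; rewrite -xy in y_new.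
by move=> /claw_u -> /claw_u ->.
Qed.

Definition leaves (v : V) := [set p : {p : V * 'I_3 | leaf_pred adj p} | (val p).1 == v].

Lemma card_leaves v : #|leaves v| = 3 - deg adj v.
Proof.
have le3 : 3 - deg adj v <= 3 by apply: leq_subr.
have widen_inj : injective (widen_ord le3) by move=> i j [] /ord_inj.
rewrite -[RHS]card_ord -(card_imset _ widen_inj) -(card_in_imset (f := fun p => (val p).2)).
  apply: eq_card => i; apply/imsetP/imsetP => [[[[w j] leaf_wj]]|[j _ ->]].
    rewrite inE /= => /eqP wv ->{i}; move: leaf_wj; rewrite /leaf_pred /= wv => lt_j.
    by exists (Ordinal lt_j); rewrite ?inE //; apply: val_inj.
  have leaf_vj : leaf_pred adj (v, widen_ord le3 j) by rewrite /leaf_pred /= ltn_ord.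
  by exists (Sub _ leaf_vj); rewrite ?inE.
move=> [[w i] pi] [[w' i'] pi']; rewrite !inE /= => /eqP wv /eqP w'v ii'.
by apply: val_inj; rewrite /= wv w'v ii'.
Qed.

Lemma deg_orig v : deg cadj (orig v) = 3.
Proof.
rewrite degE -sum1_card big_mkcond !big_sumType /= big1 // add0n -!big_mkcond /= !sum1_card.
rewrite (@eq_card _ _ [set s : edge_type adj | v \in val s]); last by move=> s; rewrite inE.
rewrite (@eq_card _ _ (leaves v)); last by move=> p; rewrite inE.
by rewrite card_edges_at // card_leaves subnKC.
Qed.

Lemma card_claw v : #|claw v| = 3.
Proof. by rewrite card_edges_at ?deg_orig //; [exact: cg_adj_sym | exact: cg_adj_irr]. Qed.

Lemma deg_new_le2 y : ~~ is_orig y -> deg cadj y <= 2.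
Proof.
case: y => [[v|s]|p] //= _; rewrite degE.
  rewrite -[X in _ <= X](card_edge adj_irr s); apply: leq_trans (leq_imset_card orig (val s)).
  by apply: subset_leq_card; apply/fintype.subsetP => -[[w|t]|p] //= ws; apply: imset_f.
apply: (@leq_trans #|[set orig (val p).1]|); last by rewrite cards1.
by apply: subset_leq_card; apply/fintype.subsetP => -[[w|t]|q] //= /eqP <-; rewrite inE.
Qed.

Lemma two_matching_claws M : two_matching M = [forall v, ~~ (claw v \subset M)].
Proof.
have at_orig v : (#|[set e in M | orig v \in val e]| <= 2) = ~~ (claw v \subset M).
  have -> : [set e in M | orig v \in val e] = M :&: claw v by apply/setP => e; rewrite !inE.
  rewrite -ltnS -[X in _ < X](card_claw v) (ltn_leqif (subset_leqif_cards (subsetIr M _))).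
  by congr (~~ _); apply/eqP/finset.setIidPr.
have matched_le_deg y : #|[set e in M | y \in val e]| <= deg cadj y.
  rewrite -(card_edges_at cg_adj_sym cg_adj_irr); apply: subset_leq_card.
  by apply/fintype.subsetP => e; rewrite !inE => /andP [].
apply/forallP/forallP => [matching v | no_claw y]; first by rewrite -at_orig; apply: matching.
case: y => [[v|s]|p]; first by have := at_orig v; rewrite /orig => ->.
all: exact: leq_trans (matched_le_deg _) (deg_new_le2 _).
Qed.

End ClawedGraph.

Theorem mainTheorem4 (R : realType) (V : finType) (adj : rel V)
    (adj_sym : symmetric adj) (adj_irr : irreflexive adj)
    (maxdeg : forall v : V, (deg adj v <= 3)%N) :
  exists k : nat,
    (3 * k = 2 * #|{: edge_type (@cg_adj V adj)}|)%N /\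
    homotopy_equivalent (@realization R _ (@M2 _ (@cg_adj V adj)))
                        (@unit_sphere R k).
Proof.
have card3 := card_claw adj_sym adj_irr maxdeg.
have cover := @claw_cover V adj; have disjoint := @claw_disjoint V adj.
exists #|{: V * 'I_2}|; split.
  rewrite (card_equipartition cover disjoint card3) card_prod card_ord.
  by rewrite mulnCA [RHS]mulnCA.
apply: (partition_complex_homotopy_sphere _ cover disjoint card3).
exact: two_matching_claws.
Qed.
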